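(* Let $i \geq 1$ and let $\psi$ be an $i$-nice $n$-dimensional unique sink orientation. Started at any vertex of $\psi$, the Random Edge algorithm performs an expected number of at most $O(n^{i+1})$ steps (before reaching the global sink).
   Context: Let $Q^n = 2^{[n]}$ be the vertex set of the $n$-cube, with $u,v$ adjacent iff $|u\oplus v|=1$; faces are $F_{J,v}=\{u : v\oplus u\subseteq J\}$ for $J\subseteq[n]$. A unique sink orientation (USO) is an orientation of the cube's edges such that every nonempty face has a unique sink (vertex with no outgoing edges within the face). The outmap $s_\psi(v)$ is the set of coordinates $j$ such that the edge $\{v,v\oplus\{j\}\}$ is directed away from $v$; the global sink is the vertex $t$ with $s_\psi(t)=\emptyset$. Write $v\rightsquigarrow u$ if there is a directed path from $v$ to $u$, and let $d(v,u)$ be the length of a shortest directed path from $v$ to $u$ ($\infty$ if none). The reachmap is $r_\psi(v)=s_\psi(v)\cup\{j : \exists u,\ v\rightsquigarrow u,\ j\in s_\psi(u)\}$. A vertex $v$ is $i$-covered by $u$ if $d(v,u)\le i$ and $r_\psi(u)\subsetneq r_\psi(v)$. The USO is $i$-nice if every vertex other than the global sink is $i$-covered by some vertex. Random Edge: at the current vertex, if it is not the global sink, choose an outgoing edge uniformly at random and move to its other endpoint; repeat. *)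

From mathcomp Require Import all_boot all_order all_algebra.
Set Implicit Arguments. Unset Strict Implicit. Unset Printing Implicit Defensive.
Import Order.TTheory GRing.Theory Num.Theory.

(* Vertices of the n-cube Q^n = 2^[n] : subsets of 'I_n. *)
Notation vertex n := {set 'I_n}.

Definition symd (n : nat) (u v : vertex n) : vertex n := (u :\: v) :|: (v :\: u).

(* An orientation of the cube is given by its outmap s : s v = set of
   coordinates j such that the edge {v, v (+) {j}} is directed away from v.
   Consistency: each edge is directed in exactly one way. *)
Definition is_orientation (n : nat) (s : vertex n -> vertex n) : Prop :=
  forall (v : vertex n) (j : 'I_n), (j \in s v) = (j \notin s (symd v [set j])).

Definition face (n : nat) (J v : vertex n) : {set vertex n} :=
  [set u | symd v u \subset J].

(* u is a sink of the face F_{J,v}: no outgoing edges within the face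
   (the edges of the face at u are exactly those in directions j in J). *)
Definition face_sink (n : nat) (s : vertex n -> vertex n) (J v u : vertex n) : bool :=
  (u \in face J v) && (s u :&: J == set0).

Definition is_uso (n : nat) (s : vertex n -> vertex n) : Prop :=
  is_orientation s /\
  forall J v : vertex n, exists! u : vertex n, face_sink s J v u.

Definition dedge (n : nat) (s : vertex n -> vertex n) : rel (vertex n) :=
  fun u w => [exists j : 'I_n, (j \in s u) && (w == symd u [set j])].

Definition dist_le (n : nat) (s : vertex n -> vertex n) (k : nat) (v u : vertex n) : Prop :=
  exists p : seq (vertex n), [/\ path (dedge s) v p, last v p = u & size p <= k].

Definition reachmap (n : nat) (s : vertex n -> vertex n) (v : vertex n) : vertex n :=
  s v :|: \bigcup_(u | connect (dedge s) v u) s u.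

Definition covered_by (n : nat) (s : vertex n -> vertex n) (i : nat) (v u : vertex n) : Prop :=
  dist_le s i v u /\ reachmap s u \proper reachmap s v.

Definition nice (n : nat) (s : vertex n -> vertex n) (i : nat) : Prop :=
  forall v : vertex n, s v != set0 -> exists u : vertex n, covered_by s i v u.

Local Open Scope ring_scope.

(* Transition probabilities of Random Edge (the global sink is absorbing). *)
Definition re_trans (n : nat) (s : vertex n -> vertex n) (u w : vertex n) : rat :=
  if s u == set0 then (w == u)%:R
  else if dedge s u w then (#|s u|%:R)^-1 else 0.

Fixpoint re_prob (n : nat) (s : vertex n -> vertex n) (k : nat) (v w : vertex n) : rat :=
  match k with
  | 0 => (w == v)%:R
  | k'.+1 => \sum_(u : vertex n) re_prob s k' v u * re_trans s u w
  end.

(* P(T > k): probability that after k steps the walk has not yet reached the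
   global sink (T = number of steps until reaching the global sink). *)
Definition re_tail (n : nat) (s : vertex n -> vertex n) (v : vertex n) (k : nat) : rat :=
  \sum_(w : vertex n | s w != set0) re_prob s k v w.

(* Partial sums of the tail-sum formula E[T] = sum_{k>=0} P(T > k). *)
Definition re_expected_partial (n : nat) (s : vertex n -> vertex n) (v : vertex n) (K : nat) : rat :=
  \sum_(k < K) re_tail s v k.

(* The size of the reachmap never grows along a directed edge, so it is a
   potential that Random Edge can only decrease.  In an i-nice orientation
   every non-sink vertex w has, within i steps, a directed path to a vertex
   whose reachmap is strictly smaller; the walk follows that path with
   probability at least n^-i, so over every window of i steps the expected
   potential drops by at least n^-i times the probability that the walk has
   not yet stopped.  Summing these drops over consecutive windows, and using
   that the potential lies in [0, n], bounds n^-i E[T] by i n. *)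

From mathcomp Require Import all_boot all_order all_algebra.
From mathcomp Require Import lra.
Import Order.TTheory GRing.Theory Num.Theory.
Local Open Scope ring_scope.
Set Implicit Arguments. Unset Strict Implicit.

Lemma re_expected_partial_dim0 (s : {set 'I_0} -> {set 'I_0}) v K :
  re_expected_partial s v K = 0.
Proof.
apply: big1 => k _; apply: big1 => w.
suff -> : s w = set0 by rewrite eqxx.
by apply/setP => -[].
Qed.

Section RandomEdge.

Variables (n : nat) (s : {set 'I_n} -> {set 'I_n}).

Lemma re_trans_ge0 u w : 0 <= re_trans s u w.
Proof.
rewrite /re_trans; case: ifP => _; first exact: ler0n.
by case: ifP => _ //; rewrite invr_ge0 ler0n.
Qed.

Lemma card_dedge_le u : (#|[pred w | dedge s u w]| <= #|s u|)%N.
Proof.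
apply: leq_trans (leq_imset_card (fun j => symd u [set j]) (s u)).
apply: subset_leq_card; apply/subsetP => w; rewrite inE.
by case/existsP => j /andP[sj /eqP ->]; apply: imset_f.
Qed.

Lemma sum_re_trans_le1 u : \sum_w re_trans s u w <= 1.
Proof.
rewrite /re_trans; case: eqP => [_ | /eqP su_ne0].
  by rewrite (bigD1 u) //= eqxx big1 ?addr0 // => w /negbTE ->.
rewrite -big_mkcond sumr_const -[_ *+ _]mulr_natl ler_pdivrMr ?ltr0n ?card_gt0 //.
by rewrite mul1r ler_nat; exact: card_dedge_le.
Qed.

Lemma re_prob_ge0 k v w : 0 <= re_prob s k v w.
Proof.
elim: k w => [|k IHk] w /=; first exact: ler0n.
by apply: sumr_ge0 => u _; rewrite mulr_ge0 ?re_trans_ge0.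
Qed.

Lemma sum_re_prob_le1 k v : \sum_w re_prob s k v w <= 1.
Proof.
elim: k => [|k IHk] /=.
  by rewrite (bigD1 v) //= eqxx big1 ?addr0 // => w /negbTE ->.
rewrite exchange_big /=; apply: le_trans IHk; apply: ler_sum => u _.
rewrite -mulr_sumr -[leRHS]mulr1.
by apply: ler_wpM2l; [exact: re_prob_ge0 | exact: sum_re_trans_le1].
Qed.

Lemma re_probD a b v w :
  re_prob s (a + b) v w = \sum_u re_prob s a v u * re_prob s b u w.
Proof.
elim: b w => [|b IHb] w.
  rewrite addn0 /= (bigD1 w) //= eqxx mulr1 big1 ?addr0 // => u.
  by rewrite eq_sym => /negbTE ->; rewrite mulr0.
rewrite addnS /=; under eq_bigr => y _ do rewrite IHb mulr_suml.
rewrite exchange_big /=; apply: eq_bigr => u _.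
by rewrite mulr_sumr; apply: eq_bigr => y _; rewrite mulrA.
Qed.

Lemma re_probSl b v w :
  re_prob s b.+1 v w = \sum_u re_trans s v u * re_prob s b u w.
Proof.
rewrite -add1n re_probD; apply: eq_bigr => u _; congr (_ * _).
rewrite /= (bigD1 v) //= eqxx mul1r big1 ?addr0 // => x /negbTE ->.
by rewrite mul0r.
Qed.

Lemma reachmap_dedge u w : dedge s u w -> reachmap s w \subset reachmap s u.
Proof.
move=> uw; apply/subsetP => j; rewrite !inE => /orP[sj | /bigcupP[x wx xj]].
  by apply/orP; right; apply/bigcupP; exists w => //; exact: connect1.
apply/orP; right; apply/bigcupP; exists x => //.
exact: connect_trans (connect1 uw) wx.
Qed.

Lemma reachmap_re_trans u w :
  re_trans s u w != 0 -> reachmap s w \subset reachmap s u.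
Proof.
rewrite /re_trans; case: (s u == set0).
  by case: (eqVneq w u) => [-> | _]; rewrite ?subxx ?eqxx.
by case: ifP => [uw _ | _]; [exact: reachmap_dedge | rewrite eqxx].
Qed.

Lemma reachmap_re_prob k v w :
  re_prob s k v w != 0 -> reachmap s w \subset reachmap s v.
Proof.
elim: k w => [|k IHk] w /=.
  by case: (eqVneq w v) => [-> | _]; rewrite ?subxx ?eqxx.
move=> /eqP /psumr_neq0P[u _ | u /= /lt0r_neq0].
  by rewrite mulr_ge0 ?re_prob_ge0 ?re_trans_ge0.
rewrite mulf_eq0 negb_or => /andP[vu uw].
exact: subset_trans (reachmap_re_trans uw) (IHk _ vu).
Qed.

Lemma re_trans_dedge_ge u w : dedge s u w -> n%:R^-1 <= re_trans s u w.
Proof.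
move=> uw; rewrite /re_trans uw.
have su_ne0 : s u != set0.
  by apply/set0Pn; case/existsP: uw => j /andP[sj _]; exists j.
have le_su_n : (#|s u| <= n)%N by rewrite -[leqRHS]card_ord max_card.
rewrite (negbTE su_ne0) lef_pV2 ?posrE ?ltr0n ?ler_nat ?card_gt0 //.
by apply: leq_trans le_su_n; rewrite card_gt0.
Qed.

Lemma path_re_prob_ge w p :
  path (dedge s) w p -> n%:R^-1 ^+ size p <= re_prob s (size p) w (last w p).
Proof.
elim: p w => [|x p IHp] w; first by rewrite /= eqxx.
rewrite [path _ _ _]/= => /andP[wx xp].
change (n%:R^-1 ^+ (size p).+1 <= re_prob s (size p).+1 w (last x p)).
rewrite re_probSl (bigD1 x) //= exprS.
rewrite -[leLHS]addr0; apply: lerD.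
  by apply: ler_pM; rewrite ?exprn_ge0 ?invr_ge0 ?ler0n ?re_trans_dedge_ge ?IHp.
by apply: sumr_ge0 => y _; rewrite mulr_ge0 ?re_trans_ge0 ?re_prob_ge0.
Qed.

Definition potential (w : {set 'I_n}) : rat := #|reachmap s w|%:R.

Definition exp_potential k v : rat := \sum_x re_prob s k v x * potential x.

Lemma potential_le w : potential w <= n%:R.
Proof. by rewrite ler_nat -[leqRHS]card_ord max_card. Qed.

Lemma re_prob_potential_le k v w :
  re_prob s k v w * potential w <= re_prob s k v w * potential v.
Proof.
have [-> | vw] := eqVneq (re_prob s k v w) 0; first by rewrite !mul0r.
rewrite ler_wpM2l ?re_prob_ge0 // ler_nat.
by apply: subset_leq_card; apply: reachmap_re_prob vw.
Qed.

Lemma exp_potential_ge0 k v : 0 <= exp_potential k v.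
Proof. by apply: sumr_ge0 => x _; rewrite mulr_ge0 ?re_prob_ge0 ?ler0n. Qed.

Lemma exp_potential_le k v : exp_potential k v <= potential v.
Proof.
apply: le_trans (ler_sum _ (fun x _ => re_prob_potential_le k v x)) _.
rewrite -mulr_suml -[leRHS]mul1r ler_wpM2r ?ler0n //; exact: sum_re_prob_le1.
Qed.

Lemma exp_potentialD a b v :
  exp_potential (a + b) v = \sum_y re_prob s a v y * exp_potential b y.
Proof.
rewrite /exp_potential; under eq_bigr => x _ do rewrite re_probD mulr_suml.
rewrite exchange_big /=; apply: eq_bigr => y _; rewrite mulr_sumr.
by apply: eq_bigr => x _; rewrite mulrA.
Qed.

Lemma exp_potential_covered i w u :
  covered_by s i w u -> exp_potential i w <= potential w - n%:R^-1 ^+ i.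
Proof.
move=> [[p [wp <- le_p_i]] reach_lt].
have potential_drop : potential (last w p) <= potential w - 1.
  by rewrite lerBrDr natr1 ler_nat; exact: proper_card.
have n_gt0 : (0 < n)%N.
  have /card_gt0P[j _] : (0 < #|reachmap s w|)%N.
    exact: leq_ltn_trans (leq0n _) (proper_card reach_lt).
  exact: leq_ltn_trans (leq0n _) (ltn_ord j).
set m := size p; set u' := last w p in potential_drop *.
rewrite -(subnKC le_p_i) exp_potentialD.
apply: le_trans (_ : \sum_y re_prob s m w y * (potential w - (y == u')%:R) <= _).
  apply: ler_sum => y _.
  apply: le_trans (ler_wpM2l (re_prob_ge0 _ _ _) (exp_potential_le _ _)) _.
  have [-> | _] := eqVneq y u'; first by rewrite ler_wpM2l ?re_prob_ge0.
  by rewrite subr0 re_prob_potential_le.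
have pick_u' : \sum_y re_prob s m w y * (y == u')%:R = re_prob s m w u'.
  rewrite (bigD1 u') //= eqxx mulr1 big1 ?addr0 // => y /negbTE ->.
  by rewrite mulr0.
under eq_bigr => y _ do rewrite mulrBr.
rewrite sumrB pick_u' -mulr_suml; apply: lerB.
  by rewrite -[leRHS]mul1r ler_wpM2r ?ler0n ?sum_re_prob_le1.
apply: le_trans (path_re_prob_ge wp); rewrite subnKC //.
by apply: ler_wiXn2l; rewrite ?invr_ge0 ?ler0n ?invf_le1 ?ler1n ?ltr0n.
Qed.

Variables (i : nat) (v : {set 'I_n}).
Hypothesis s_nice : nice s i.

Lemma exp_potential_nice w :
  exp_potential i w <= potential w - n%:R^-1 ^+ i * (s w != set0)%:R.
Proof.
have [w_ns | _] := boolP (s w != set0); last by rewrite mulr0 subr0 exp_potential_le.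
by have [u cov] := s_nice w_ns; rewrite mulr1 (exp_potential_covered cov).
Qed.

Lemma exp_potential_window k :
  exp_potential (k + i) v <= exp_potential k v - n%:R^-1 ^+ i * re_tail s v k.
Proof.
rewrite exp_potentialD.
apply: le_trans
  (ler_sum _ (fun y _ => ler_wpM2l (re_prob_ge0 k v y) (exp_potential_nice y))) _.
under eq_bigr => y _ do rewrite mulrBr.
rewrite sumrB lerB // mulr_sumr big_mkcond /= ler_sum // => y _.
by case: (s y != set0); rewrite ?mulr1 ?mulr0 // mulrC.
Qed.

Definition window_potential K := \sum_(j < i) exp_potential (K + j) v.

(* Shifting the window by one step trades exp_potential K for
   exp_potential (K + i), which exp_potential_window bounds. *)
Lemma window_potential_telescope K :
  n%:R^-1 ^+ i * re_expected_partial s v K + window_potential K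
    <= window_potential 0.
Proof.
elim: K => [|K IHK]; first by rewrite /re_expected_partial big_ord0 mulr0 add0r.
apply: le_trans IHK; rewrite /re_expected_partial big_ord_recr /= mulrDr -addrA lerD2l.
have window_split : exp_potential K v + window_potential K.+1
                    = window_potential K + exp_potential (K + i) v.
  transitivity (\sum_(j < i.+1) exp_potential (K + j) v); last exact: big_ord_recr.
  rewrite big_ord_recl addn0; congr (_ + _).
  by apply: eq_bigr => j _; rewrite addSnnS.
have := exp_potential_window K; lra.
Qed.

Lemma re_expected_partial_le (n_gt0 : (0 < n)%N) K :
  re_expected_partial s v K <= i%:R * n%:R ^+ i.+1.
Proof.
have window0_le : window_potential 0 <= i%:R * n%:R.
  have <- : \sum_(j < i) n%:R = i%:R * n%:R :> rat.
    by rewrite sumr_const card_ord mulr_natl.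
  by apply: ler_sum => j _; apply: le_trans (exp_potential_le _ _) (potential_le v).
have windowK_ge0 : 0 <= window_potential K.
  by apply: sumr_ge0 => j _; exact: exp_potential_ge0.
have n_unit : n%:R ^+ i * n%:R^-1 ^+ i = 1 :> rat.
  by rewrite -exprMn divff ?expr1n // pnatr_eq0 -lt0n.
rewrite -[leLHS]mul1r -{1}n_unit -mulrA exprSr [leRHS]mulrCA.
rewrite ler_wpM2l ?exprn_ge0 ?ler0n //.
have := window_potential_telescope K; lra.
Qed.

End RandomEdge.

Theorem theorem4 (i : nat) (hi : (1 <= i)%N) :
  exists C : rat, 0 < C /\
    forall (n : nat) (s : {set 'I_n} -> {set 'I_n}),
      is_uso s -> nice s i ->
      forall (v : {set 'I_n}) (K : nat),
        re_expected_partial s v K <= C * (n%:R) ^+ i.+1.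
Proof.
exists i%:R; split; first by rewrite ltr0n.
move=> [|n] s _ s_nice v K; first by rewrite re_expected_partial_dim0 expr0n mulr0.
exact: re_expected_partial_le.
Qed.
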